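(* Let $(\xi_n)_{n\ge0}$ be a real-valued process adapted to a filtration $(\mathcal F_n)_{n\ge0}$, and suppose there exist $a\in\mathbb R$ and $b>0$ such that: (1) $\mathbb E\big((\xi_{k+1}-\xi_k)1_{\{\xi_k\ge a\}}\mid\mathcal F_k\big)\le 0$ a.s. for all $k$; (2) $\limsup_{k\to\infty}1_{\{\xi_k<a<\xi_{k+1}\}}(\xi_{k+1}-a)\le b$ almost surely; (3) $\sum_k\mathbb E\big[(\xi_{k+1}-\xi_k)^2 1_{\{\xi_k\ge a\}}\big]<\infty$. Let $A^\pm_a$ be the event that $\xi_n-a$ switches sign infinitely often. Then almost surely on $A^\pm_a$ we have $\limsup_{n\to\infty}\xi_n\le a+b$. *)

From HB Require Import structures.
From mathcomp Require Import all_boot all_order all_algebra.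
From mathcomp Require Import all_classical all_reals all_analysis.
Set Implicit Arguments. Unset Strict Implicit. Unset Printing Implicit Defensive.
Import Order.TTheory GRing.Theory Num.Theory.
Local Open Scope classical_set_scope.
Local Open Scope ring_scope.

Definition filtration d (T : measurableType d) (F : nat -> set (set T)) :=
  (forall n, sigma_algebra setT (F n)) /\
  (forall n, F n `<=` measurable) /\
  (forall n, F n `<=` F n.+1).

Definition measurable_wrt d (T : measurableType d) (R : realType)
  (G : set (set T)) (f : T -> R) :=
  forall B : set R, measurable B -> G (f @^-1` B).

Definition adapted d (T : measurableType d) (R : realType)
  (F : nat -> set (set T)) (xi : nat -> T -> R) :=
  forall n, @measurable_wrt d T R (F n) (xi n).

Definition cond_exp_version d (T : measurableType d) (R : realType)
  (P : probability T R) (G : set (set T)) (X Y : T -> R) :=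
  [/\ P.-integrable setT (EFin \o X),
      measurable_wrt G Y,
      P.-integrable setT (EFin \o Y) &
      forall B, G B -> (\int[P]_(x in B) (Y x)%:E = \int[P]_(x in B) (X x)%:E)%E].

Definition cond_exp_nonpos d (T : measurableType d) (R : realType)
  (P : probability T R) (G : set (set T)) (X : T -> R) :=
  exists Y, cond_exp_version P G X Y /\ {ae P, forall w, Y w <= 0}.

Definition indic_b (R : realType) (b : bool) : R := if b then 1 else 0.

Definition switches_io (R : realType) T (xi : nat -> T -> R) (a : R) : set T :=
  [set w | (forall N, exists2 n, (N <= n)%N & xi n w < a) /\
           (forall N, exists2 n, (N <= n)%N & a < xi n w)].

(* Fix [eps > 0] and write [D_k = (xi_{k+1} - xi_k) 1{xi_k >= a}].  Started at a
   time [N], the reflected walk [V_0 = 0], [V_{i+1} = max (V_i + D_{N+i}) 0]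
   coincides with its copy frozen at the level [eps] until that level is reached.
   The drift condition gives [E (Z D_k) <= 0] for every bounded nonnegative
   [F_k]-measurable [Z] (approximate [Z] from below by [F_k]-step functions), so the
   second moment of the frozen walk grows by at most [E D_{N+i}^2] per step, and
   by Markov's inequality the walk reaches [eps] with probability at most
   [eps^-2 sum_{k >= N} E D_k^2], which tends to [0].  Hence almost surely, for
   every [eps], the walk started late enough stays below [eps].
   On the other hand, if [xi] goes below [a] infinitely often, eventually
   overshoots [a] by less than [b + eps], but also exceeds [a + b + 2 eps]
   infinitely often, then from the last visit below [a] before such a time the
   reflected walk climbs by at least [eps]. *)

From HB Require Import structures.
From mathcomp Require Import all_boot all_order all_algebra.
From mathcomp Require Import all_classical all_reals all_analysis.
From mathcomp Require Import measurable_realfun.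
From mathcomp Require Import lra zify.
Import Order.TTheory GRing.Theory Num.Theory.
Local Open Scope classical_set_scope.
Local Open Scope ring_scope.
Set Implicit Arguments. Unset Strict Implicit.

Lemma indic_b_ge0 (R : realType) (b : bool) : 0 <= indic_b R b.
Proof. by case: b. Qed.

Definition pos_part (R : realType) (x : R) := Num.max x 0.
Definition neg_part (R : realType) (x : R) := Num.max (- x) 0.

Lemma pos_part_ge0 (R : realType) (x : R) : 0 <= pos_part x.
Proof. by rewrite le_max lexx orbT. Qed.

Lemma neg_part_ge0 (R : realType) (x : R) : 0 <= neg_part x.
Proof. by rewrite le_max lexx orbT. Qed.

Lemma trunc_sum_indic_b (R : realType) (y : R) (n : nat) : 0 <= y <= n%:R ->
  (Num.trunc y)%:R = \sum_(j < n.+1) j%:R * indic_b R ((j%:R <= y) && (y < j.+1%:R)).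
Proof.
case/andP=> y0 yn.
have tn : (Num.trunc y < n.+1)%N.
  have /andP[ty _] := truncn_itv y0.
  by rewrite ltnS -(ler_nat R); apply: le_trans ty yn.
rewrite (bigD1 (Ordinal tn)) //= big1 ?addr0; first by rewrite truncn_itv ?mulr1.
move=> j /eqP jt; rewrite /indic_b; case: ifP => jy; last by rewrite mulr0.
by exfalso; apply: jt; apply/val_inj/eqP => /=; rewrite eq_sym (truncn_eq _ y0).
Qed.

Lemma sqr_max_add_indic_le (R : realType) (x y : R) (c : bool) : 0 <= x ->
  Num.max (x + y * indic_b R c) 0 ^+ 2 + 2 * x * indic_b R c * neg_part y <=
  x ^+ 2 + y ^+ 2 + 2 * x * indic_b R c * pos_part y.
Proof.
move=> x0; rewrite /pos_part /neg_part /indic_b; case: c.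
  by rewrite !mulr1; case: (leP (x + y) 0); case: (leP y 0); case: (leP (- y) 0); nra.
by rewrite !mulr0 addr0 max_l //; nra.
Qed.

Lemma lee_cancel_fin (R : realType) (x y p q : \bar R) : q \is a fin_num ->
  (p <= q)%E -> (x + q <= y + p)%E -> (x <= y)%E.
Proof.
by move=> qfin pq xy; rewrite -(leeD2rE _ _ qfin); apply: le_trans xy (leeD2l _ pq).
Qed.

Lemma indic_bE (T : Type) (R : realType) (p : T -> bool) (w : T) :
  indic_b R (p w) = \1_[set w | p w] w.
Proof.
rewrite indicE /indic_b; case: (boolP (p w)) => h; first by rewrite mem_set.
by rewrite memNset //; apply/negP.
Qed.

Lemma measurable_indic_b d (T : measurableType d) (R : realType) (p : T -> bool) :
  measurable [set w | p w] -> measurable_fun setT (fun w => indic_b R (p w)).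
Proof.
move=> mp; rewrite (_ : (fun w => _) = \1_[set w | p w]); last exact/funext/indic_bE.
exact: measurable_indic.
Qed.

Lemma funepos_EFin (T : Type) (R : realType) (f : T -> R) :
  ((fun w => (f w)%:E)^\+ = fun w => (pos_part (f w))%:E)%E.
Proof. by apply/funext => w; rewrite funeposE -EFin_max. Qed.

Lemma funeneg_EFin (T : Type) (R : realType) (f : T -> R) :
  ((fun w => (f w)%:E)^\- = fun w => (neg_part (f w))%:E)%E.
Proof. by apply/funext => w; rewrite funenegE -EFin_max. Qed.

Section real_integral.
Context d (T : measurableType d) (R : realType) (mu : {measure set T -> \bar R}).

Lemma ge0_integral_EFinD (f g : T -> R) :
  measurable_fun setT f -> measurable_fun setT g ->
  (forall w, 0 <= f w) -> (forall w, 0 <= g w) ->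
  (\int[mu]_w (f w + g w)%:E = \int[mu]_w (f w)%:E + \int[mu]_w (g w)%:E)%E.
Proof.
move=> mf mg f0 g0; under eq_integral do rewrite EFinD.
apply: ge0_integralD => //.
- by move=> w _; rewrite lee_fin.
- exact/measurable_EFinP.
- by move=> w _; rewrite lee_fin.
- exact/measurable_EFinP.
Qed.

Lemma ge0_integral_indic_b_sum_mul n (c : 'I_n -> R) (p : 'I_n -> T -> bool)
  (g : T -> R) :
  (forall j, measurable [set w | p j w]) -> measurable_fun setT g ->
  (forall w, 0 <= g w) -> (forall j, 0 <= c j) ->
  (\int[mu]_w ((\sum_(j < n) c j * indic_b R (p j w)) * g w)%:E =
   \sum_(j < n) (c j)%:E * \int[mu]_(w in [set w | p j w]) (g w)%:E)%E.
Proof.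
move=> mp mg g0 c0.
under eq_integral do rewrite mulr_suml -sumEFin.
rewrite ge0_integral_sum //; last 2 first.
- move=> j; apply/measurable_EFinP/measurable_funM => //.
  exact/measurable_funM/measurable_indic_b.
- by move=> j w _; rewrite lee_fin !mulr_ge0 ?indic_b_ge0.
apply: eq_bigr => j _; under eq_integral do rewrite -mulrA EFinM.
rewrite ge0_integralZl_EFin //; last 2 first.
- by move=> w _; rewrite lee_fin mulr_ge0 ?indic_b_ge0.
- exact/measurable_EFinP/measurable_funM/mg/measurable_indic_b.
congr (_ * _)%E; rewrite [RHS]integral_mkcond epatch_indic.
by apply: eq_integral => w _; rewrite /= indic_bE EFinM muleC.
Qed.

Lemma sqr_markov (g : T -> R) (eps : R) : 0 <= eps -> measurable_fun setT g ->
  ((eps ^+ 2)%:E * mu [set w | (eps <= g w)%R] <= \int[mu]_w (g w ^+ 2)%:E)%E.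
Proof.
move=> eps0 mg; set A := [set w | (eps <= g w)%R].
have mA : measurable A.
  have := mg measurableT _ (measurable_itv `[eps, +oo[); rewrite setTI.
  by congr measurable; apply/seteqP; split => w /=; rewrite in_itv /= andbT.
have m1A : measurable_fun setT (fun w => (\1_A w : R)%:E).
  exact/measurable_EFinP/measurable_indic.
rewrite -[X in mu X]setIT -integral_indic // -ge0_integralZl_EFin ?sqr_ge0 //.
apply: ge0_le_integral => //.
- by move=> w _; rewrite -EFinM lee_fin mulr_ge0 ?sqr_ge0 // indicE.
- exact/measurable_EFinP/measurable_funM/measurable_indic.
- exact/measurable_EFinP/measurable_funX.
move=> w _; rewrite -EFinM lee_fin indicE; case: (boolP (w \in A)) => [/set_mem Aw|_].
  by rewrite mulr1 lerXn2r // ?nnegrE // (le_trans eps0).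
by rewrite mulr0 sqr_ge0.
Qed.

End real_integral.

Lemma measurable_wrt_sub d (T : measurableType d) (R : realType) (G H : set (set T))
  (f : T -> R) : G `<=` H -> measurable_wrt G f -> measurable_wrt H f.
Proof. by move=> GH mf B mB; apply: GH; exact: mf. Qed.

Lemma measurable_wrt_measurable d (T : measurableType d) (R : realType)
  (G : set (set T)) (f : T -> R) :
  G `<=` measurable -> measurable_wrt G f -> measurable_fun setT f.
Proof. by move=> GH mf _ B mB; rewrite setTI; apply: GH; exact: mf. Qed.

Lemma measurable_wrt_lt d (T : measurableType d) (R : realType) (G : set (set T))
  (f : T -> R) c : measurable_wrt G f -> G [set w | f w < c].
Proof. by move=> /(_ _ (measurable_itv `]-oo, c[)); congr G. Qed.

Lemma measurable_wrt_ge d (T : measurableType d) (R : realType) (G : set (set T))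
  (f : T -> R) c : measurable_wrt G f -> G [set w | c <= f w].
Proof.
move=> /(_ _ (measurable_itv `[c, +oo[)); congr G.
by apply/seteqP; split => w /=; rewrite in_itv /= andbT.
Qed.

Section measurable_wrt.
Context d (T : measurableType d) (R : realType) (G : set (set T)).
Hypothesis sG : sigma_algebra setT G.

Let GE : G.-sigma.-measurable = G := measurable_g_measurableTypeE sG.

Lemma measurable_wrtP (f : T -> R) :
  measurable_wrt G f <-> measurable_fun (setT : set (g_sigma_algebraType G)) f.
Proof.
split=> [mf _ B mB|mf B mB]; first by rewrite setTI GE; exact: mf.
by rewrite -GE -[X in _ X]setTI; exact: mf.
Qed.

Lemma measurable_wrtD (f g : T -> R) : measurable_wrt G f -> measurable_wrt G g ->
  measurable_wrt G (f \+ g).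
Proof.
by move=> /measurable_wrtP mf /measurable_wrtP mg; exact/measurable_wrtP/measurable_funD.
Qed.

Lemma measurable_wrtM (f g : T -> R) : measurable_wrt G f -> measurable_wrt G g ->
  measurable_wrt G (f \* g).
Proof.
by move=> /measurable_wrtP mf /measurable_wrtP mg; exact/measurable_wrtP/measurable_funM.
Qed.

Lemma measurable_wrtN (f : T -> R) : measurable_wrt G f -> measurable_wrt G (\- f).
Proof. by move=> /measurable_wrtP mf; exact/measurable_wrtP/measurableT_comp. Qed.

Lemma measurable_wrt_cst (c : R) : measurable_wrt G (cst c).
Proof. exact/measurable_wrtP/measurable_cst. Qed.

Lemma measurable_wrt_max (f g : T -> R) : measurable_wrt G f -> measurable_wrt G g ->
  measurable_wrt G (fun w => Num.max (f w) (g w)).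
Proof.
move=> /measurable_wrtP mf /measurable_wrtP mg.
by apply/measurable_wrtP; exact: measurable_maxr.
Qed.

Lemma measurable_wrt_indic_b (p : T -> bool) : G [set w | p w] ->
  measurable_wrt G (fun w => indic_b R (p w)).
Proof. by move=> Gp; apply/measurable_wrtP/measurable_indic_b; rewrite GE. Qed.

Lemma sigma_algebraI (A B : set T) : G A -> G B -> G (A `&` B).
Proof. by rewrite -GE; exact: measurableI. Qed.

Lemma measurable_wrt_step_approx (Z : T -> R) (c h : R) : 0 < h ->
  measurable_wrt G Z -> (forall w, 0 <= Z w <= c) ->
  exists n (p : 'I_n -> T -> bool), (forall j, G [set w | p j w]) /\
    (forall w, \sum_(j < n) h * j%:R * indic_b R (p j w) <= Z w <=
               \sum_(j < n) h * j%:R * indic_b R (p j w) + h).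
Proof.
move=> h0 mZ Zb; pose y w := Z w / h.
have y0 w : 0 <= y w by rewrite divr_ge0 ?(ltW h0) //; case/andP: (Zb w).
pose n := (Num.trunc (c / h)).+1.
have yn w : 0 <= y w <= n%:R.
  have /andP[Z0 Zc] := Zb w; rewrite y0 /=.
  have ch0 : 0 <= c / h by rewrite divr_ge0 ?(ltW h0) ?(le_trans Z0).
  have /andP[_ /ltW chn] := truncn_itv ch0.
  by apply: le_trans chn; rewrite ler_wpM2r // invr_ge0 ltW.
pose p (j : 'I_n.+1) w := (j%:R <= y w) && (y w < j.+1%:R).
exists n.+1, p; split => [j|w].
  have my : measurable_wrt G y := measurable_wrtM mZ (measurable_wrt_cst _).
  rewrite (_ : [set w | p j w] = [set w | j%:R <= y w] `&` [set w | y w < j.+1%:R]).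
    exact: sigma_algebraI (measurable_wrt_ge _ my) (measurable_wrt_lt _ my).
  by apply/seteqP; split => w; rewrite /= /p; [move/andP | case=> -> ->].
under eq_bigr do rewrite -mulrA; rewrite -mulr_sumr -trunc_sum_indic_b //.
have /andP[lo hi] := truncn_itv (y0 w); rewrite -natr1 in hi.
have -> : Z w = h * y w by rewrite /y mulrC divfK ?gt_eqF.
by apply/andP; split; nra.
Qed.

End measurable_wrt.

Section filtration.
Context d (T : measurableType d) (R : realType) (F : nat -> set (set T)).
Hypothesis hF : filtration F.

Lemma filtration_sigma_algebra n : sigma_algebra setT (F n).
Proof. by case: hF. Qed.

Lemma filtration_sub_measurable n : F n `<=` measurable.
Proof. by case: hF => _ []. Qed.

Lemma filtration_mono m n : (m <= n)%N -> F m `<=` F n.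
Proof.
move=> /subnKC <-; elim: (n - m)%N => [|k IH]; first by rewrite addn0.
by apply: subset_trans IH _; rewrite addnS; case: hF => _ [].
Qed.

Lemma adapted_measurable_wrt (xi : nat -> T -> R) m n : adapted F xi ->
  (m <= n)%N -> measurable_wrt (F n) (xi m).
Proof. by move=> hxi mn; apply: measurable_wrt_sub (hxi m); exact: filtration_mono. Qed.

End filtration.

Section cond_exp_nonpos.
Context d (T : measurableType d) (R : realType) (P : probability T R)
  (G : set (set T)) (X : T -> R).
Hypotheses (sG : sigma_algebra setT G) (GM : G `<=` measurable).
Hypothesis X_nonpos : cond_exp_nonpos P G X.

Let X_integrable : P.-integrable setT (EFin \o X).
Proof. by case: X_nonpos => Y [[]]. Qed.

Let mX : measurable_fun setT X.
Proof. by apply/measurable_EFinP; exact: measurable_int X_integrable. Qed.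

Let mpos : measurable_fun setT (fun w => pos_part (X w)).
Proof. exact: measurable_maxr mX (measurable_cst _). Qed.

Let mneg : measurable_fun setT (fun w => neg_part (X w)).
Proof. exact: measurable_maxr (measurable_funN mX) (measurable_cst _). Qed.

Lemma integral_pos_part_lt_pinfty : (\int[P]_w (pos_part (X w))%:E < +oo)%E.
Proof. by rewrite -funepos_EFin; exact: integral_funepos_lt_pinfty X_integrable. Qed.

Lemma integral_neg_part_lt_pinfty : (\int[P]_w (neg_part (X w))%:E < +oo)%E.
Proof. by rewrite -funeneg_EFin; exact: integral_funeneg_lt_pinfty X_integrable. Qed.

Lemma integral_mul_neg_part_fin_num (Z : T -> R) (c : R) : 0 <= c ->
  measurable_fun setT Z -> (forall w, 0 <= Z w <= c) ->
  (\int[P]_w (Z w * neg_part (X w))%:E)%E \is a fin_num.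
Proof.
move=> c0 mZ Zb; have Z0 w : 0 <= Z w by case/andP: (Zb w).
rewrite ge0_fin_numE; last by apply: integral_ge0 => w _; rewrite lee_fin mulr_ge0 ?neg_part_ge0.
apply: (@le_lt_trans _ _ (\int[P]_w (c%:E * (neg_part (X w))%:E))%E).
  apply: ge0_le_integral => //.
  - by move=> w _; rewrite lee_fin mulr_ge0 ?neg_part_ge0.
  - exact/measurable_EFinP/measurable_funM.
  - exact/measurable_EFinP/measurable_funM/mneg/measurable_cst.
  - move=> w _; rewrite -EFinM lee_fin ler_wpM2r ?neg_part_ge0 //.
    by case/andP: (Zb w).
rewrite ge0_integralZl_EFin //; last 2 first.
- by move=> w _; rewrite lee_fin neg_part_ge0.
- exact/measurable_EFinP.
by rewrite lte_mul_pinfty ?lee_fin // integral_neg_part_lt_pinfty.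
Qed.

Lemma integral_set_pos_le_neg (S : set T) : G S ->
  (\int[P]_(w in S) (pos_part (X w))%:E <= \int[P]_(w in S) (neg_part (X w))%:E)%E.
Proof.
move=> GS; have mS := GM GS.
have [Y [[_ mY _ YX] Y_le0]] := X_nonpos.
have mYT := measurable_wrt_measurable GM mY.
have Ypos0 : (\int[P]_(w in S) (pos_part (Y w))%:E = 0)%E.
  apply/le_anti; rewrite integral_ge0 ?andbT; last first.
    by move=> w _; rewrite lee_fin pos_part_ge0.
  rewrite -(integral0 P S); apply: ae_ge0_le_integral => //.
  - by move=> w _; rewrite lee_fin pos_part_ge0.
  - by apply/measurable_EFinP/measurable_funTS; exact: measurable_maxr.
  - by apply: filterS Y_le0 => w Yw _; rewrite lee_fin ge_max Yw lexx.
have intY_le0 : (\int[P]_(w in S) (Y w)%:E <= 0)%E.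
  rewrite integralE funepos_EFin funeneg_EFin Ypos0 sub0e oppe_le0.
  by apply: integral_ge0 => w _; rewrite lee_fin neg_part_ge0.
by move: intY_le0; rewrite YX // integralE funepos_EFin funeneg_EFin sube_le0.
Qed.

Lemma integral_indic_b_sum_pos_le_neg n (c : 'I_n -> R) (p : 'I_n -> T -> bool) :
  (forall j, 0 <= c j) -> (forall j, G [set w | p j w]) ->
  (\int[P]_w ((\sum_(j < n) c j * indic_b R (p j w)) * pos_part (X w))%:E <=
   \int[P]_w ((\sum_(j < n) c j * indic_b R (p j w)) * neg_part (X w))%:E)%E.
Proof.
move=> c0 Gp; have mp j := GM (Gp j).
rewrite !ge0_integral_indic_b_sum_mul // => [|w|w]; rewrite ?neg_part_ge0 ?pos_part_ge0 //.
apply: lee_sum => j _; apply: lee_wpmul2l; first by rewrite lee_fin.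
exact: integral_set_pos_le_neg.
Qed.

Lemma integral_mul_pos_le_neg_add (Z : T -> R) (c h : R) : 0 < h ->
  measurable_wrt G Z -> (forall w, 0 <= Z w <= c) ->
  (\int[P]_w (Z w * pos_part (X w))%:E <=
   \int[P]_w (Z w * neg_part (X w))%:E + h%:E * \int[P]_w (pos_part (X w))%:E)%E.
Proof.
move=> h0 mZ Zb; have mZT := measurable_wrt_measurable GM mZ.
have [n [p [Gp ZhZ]]] := measurable_wrt_step_approx sG h0 mZ Zb.
pose Zh w := \sum_(j < n) h * j%:R * indic_b R (p j w).
have mZh : measurable_fun setT Zh.
  by apply: measurable_sum => j; exact/measurable_funM/measurable_indic_b/GM.
have Zh0 w : 0 <= Zh w.
  by apply: sumr_ge0 => j _; rewrite !mulr_ge0 ?indic_b_ge0 ?(ltW h0).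
have Z_to_Zh : (\int[P]_w (Z w * pos_part (X w))%:E <=
    \int[P]_w (Zh w * pos_part (X w) + h * pos_part (X w))%:E)%E.
  apply: ge0_le_integral => //.
  - by move=> w _; rewrite lee_fin mulr_ge0 ?pos_part_ge0 //; case/andP: (Zb w).
  - exact/measurable_EFinP/measurable_funM.
  - exact/measurable_EFinP/measurable_funD/measurable_funM/mpos/measurable_cst/measurable_funM.
  - move=> w _; rewrite lee_fin -mulrDl ler_wpM2r ?pos_part_ge0 //.
    by case/andP: (ZhZ w).
have Zh_pos_le_neg : (\int[P]_w (Zh w * pos_part (X w))%:E <=
    \int[P]_w (Zh w * neg_part (X w))%:E)%E.
  apply: integral_indic_b_sum_pos_le_neg => // j.
  by rewrite mulr_ge0 ?(ltW h0).
have Zh_to_Z : (\int[P]_w (Zh w * neg_part (X w))%:E <=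
    \int[P]_w (Z w * neg_part (X w))%:E)%E.
  apply: ge0_le_integral => //.
  - by move=> w _; rewrite lee_fin mulr_ge0 ?neg_part_ge0.
  - exact/measurable_EFinP/measurable_funM.
  - exact/measurable_EFinP/measurable_funM.
  - by move=> w _; rewrite lee_fin ler_wpM2r ?neg_part_ge0 //; case/andP: (ZhZ w).
apply: (le_trans Z_to_Zh); rewrite ge0_integral_EFinD; last 4 first.
- exact: measurable_funM.
- exact/measurable_funM/mpos/measurable_cst.
- by move=> w; rewrite mulr_ge0 ?pos_part_ge0.
- by move=> w; rewrite mulr_ge0 ?pos_part_ge0 ?(ltW h0).
under [X in (_ + X)%E]eq_integral do rewrite EFinM.
rewrite ge0_integralZl_EFin ?(ltW h0) //; last 2 first.
- by move=> w _; rewrite lee_fin pos_part_ge0.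
- exact/measurable_EFinP.
by rewrite leeD2r // (le_trans Zh_pos_le_neg).
Qed.

Lemma integral_mul_pos_le_neg (Z : T -> R) (c : R) : measurable_wrt G Z ->
  (forall w, 0 <= Z w <= c) ->
  (\int[P]_w (Z w * pos_part (X w))%:E <= \int[P]_w (Z w * neg_part (X w))%:E)%E.
Proof.
move=> mZ Zb; apply/lee_addgt0Pr => e e0.
have pos_ge0 : (0 <= \int[P]_w (pos_part (X w))%:E)%E.
  by apply: integral_ge0 => w _; rewrite lee_fin pos_part_ge0.
have /fineK rE : (\int[P]_w (pos_part (X w))%:E)%E \is a fin_num.
  by rewrite ge0_fin_numE ?integral_pos_part_lt_pinfty.
set r := fine _ in rE; have r0 : 0 <= r by rewrite -lee_fin rE.
have r1 : 0 < r + 1 by lra.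
apply: le_trans (integral_mul_pos_le_neg_add (divr_gt0 e0 r1) mZ Zb) _.
rewrite -rE -EFinM; apply: leeD2l; rewrite lee_fin mulrAC ler_pdivrMr // ler_pM2l //.
lra.
Qed.

End cond_exp_nonpos.

Section reflected_walk.
Context (R : realType) (u : nat -> R).

Fixpoint reflected_walk (i : nat) : R :=
  if i is i'.+1 then Num.max (reflected_walk i' + u i') 0 else 0.

(* Freezing the walk at [eps] makes [eps <= _] a nondecreasing event and keeps
   the factor in front of each increment bounded. *)
Fixpoint stopped_walk (eps : R) (i : nat) : R :=
  if i is i'.+1 then
    Num.max (stopped_walk eps i' + u i' * indic_b R (stopped_walk eps i' < eps)) 0
  else 0.

Lemma reflected_walk_ge0 i : 0 <= reflected_walk i.
Proof. by case: i => [|i] //=; rewrite le_max lexx orbT. Qed.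

Lemma stopped_walk_ge0 eps i : 0 <= stopped_walk eps i.
Proof. by case: i => [|i] //=; rewrite le_max lexx orbT. Qed.

Lemma stopped_walk_stop eps i : eps <= stopped_walk eps i ->
  stopped_walk eps i.+1 = stopped_walk eps i.
Proof.
by move=> h /=; rewrite /indic_b ltNge h mulr0 addr0 max_l // stopped_walk_ge0.
Qed.

Lemma stopped_walk_lt eps i : stopped_walk eps i < eps ->
  stopped_walk eps i = reflected_walk i.
Proof.
elim: i => [|i IH] //=; have [lt|ge] := ltP (stopped_walk eps i) eps.
  by rewrite mulr1 IH.
rewrite mulr0 addr0 max_l ?stopped_walk_ge0 // => lt.
by move: (lt_le_trans lt ge); rewrite ltxx.
Qed.

Lemma reflected_walk_lt eps i : stopped_walk eps i < eps -> reflected_walk i < eps.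
Proof. by move=> lt; rewrite -(stopped_walk_lt lt). Qed.

Lemma reflected_walk_incr (x : nat -> R) m n : (m <= n)%N ->
  (forall j, (m <= j < n)%N -> u j = x j.+1 - x j) ->
  reflected_walk m + x n - x m <= reflected_walk n.
Proof.
move=> /subnKC <-; elim: (n - m)%N => [|k IH] ux; first by rewrite addn0 addrK.
have IH' : reflected_walk m + x (m + k)%N - x m <= reflected_walk (m + k).
  by apply: IH => j /andP[mj jk]; apply: ux; lia.
rewrite addnS /= le_max (ux (m + k)%N); last by lia.
by apply/orP; left; lra.
Qed.

End reflected_walk.

Definition increment_above (R : realType) (x : nat -> R) (a : R) (k : nat) :=
  (x k.+1 - x k) * indic_b R (a <= x k).

Lemma increment_above_sqr (R : realType) (x : nat -> R) a k :
  increment_above x a k ^+ 2 = (x k.+1 - x k) ^+ 2 * indic_b R (a <= x k).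
Proof. by rewrite exprMn /indic_b; case: (a <= x k); rewrite ?expr1n ?expr0n ?mulr0. Qed.

Lemma last_below (R : realType) (x : nat -> R) (a : R) k1 n : (k1 <= n)%N ->
  x k1 < a ->
  exists k, [/\ (k1 <= k <= n)%N, x k < a & forall j, (k < j <= n)%N -> a <= x j].
Proof.
move=> /subnKC <- xk1; elim: (n - k1)%N => [|d [k [/andP[k1k kn] xk above]]].
  by exists k1; split => // [|j]; lia.
have [lt|ge] := ltP (x (k1 + d.+1)%N) a.
  by exists (k1 + d.+1)%N; split => // [|j]; lia.
exists k; split => [| // |j /andP[kj jn]]; first lia.
have [->|jd] := eqVneq j (k1 + d.+1)%N; first exact: ge.
by apply: above; lia.
Qed.

(* From the last visit [k] below [a] to time [n], the increments above [a] are
   the increments of [x] itself, and the first of them overshoots [a] by less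
   than [b + eps]. *)
Lemma reflected_walk_ge_crossing (R : realType) (x : nat -> R) (a b eps : R)
  (N k1 n : nat) : 0 < b -> 0 < eps -> (N <= k1 <= n)%N -> x k1 < a ->
  a + b + 2 * eps < x n ->
  (forall k, (k1 <= k)%N ->
     indic_b R ((x k < a) && (a < x k.+1)) * (x k.+1 - a) < b + eps) ->
  eps <= reflected_walk (fun j => increment_above x a (N + j)) (n - N).
Proof.
move=> b0 e0 /andP[Nk1 k1n] xk1 xn overshoot.
have [k [/andP[k1k kn] xk above]] := last_below k1n xk1.
have kn' : (k < n)%N by rewrite ltn_neqAle kn andbT; apply: contraTneq xk => ->; lra.
have xk1a : a <= x k.+1 by apply: above; lia.
have xk1b : x k.+1 < a + b + eps.
  move: (overshoot k k1k); rewrite /indic_b xk /=.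
  by case: (ltP a (x k.+1)) => xa; rewrite ?mul1r ?mul0r; lra.
have climb := @reflected_walk_incr R (fun j => increment_above x a (N + j))
  (fun j => x (N + j)%N) (k.+1 - N) (n - N).
rewrite !subnKC in climb; [|lia|lia].
have := reflected_walk_ge0 (fun j => increment_above x a (N + j)) (k.+1 - N).
suff : reflected_walk (fun j => increment_above x a (N + j)) (k.+1 - N) +
  x n - x k.+1 <= reflected_walk (fun j => increment_above x a (N + j)) (n - N).
  by lra.
apply: climb => [|j jn]; first lia.
rewrite /increment_above /indic_b addnS.
by rewrite (_ : a <= x (N + j)%N) ?mulr1 //; apply: above; lia.
Qed.

Section limn_esup_witnesses.
Context (R : realType).
Local Open Scope ereal_scope.
Implicit Types (u : (\bar R)^nat) (x : \bar R).

Let limn_esupE u : limn_esup u = ereal_inf (range (esups u)).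
Proof. by rewrite limn_esup_lim; apply: cvg_lim => //; exact: cvg_esups_inf. Qed.

Lemma limn_esup_lt_eventually u x : limn_esup u < x ->
  exists K, forall k, (K <= k)%N -> u k < x.
Proof.
rewrite limn_esupE => /ereal_inf_lt [_ [K _ <-]] uK; exists K => k Kk.
by apply: le_lt_trans uK; apply: ereal_sup_ubound; exists k.
Qed.

Lemma lt_limn_esup_infinitely u x : x < limn_esup u ->
  forall N, exists2 n, (N <= n)%N & x < u n.
Proof.
rewrite limn_esupE => xu N.
have /ereal_sup_gt [_ [n /= Nn <-] xun] : x < esups u N.
  by apply: lt_le_trans xu _; apply: ereal_inf_lbound; exists N.
by exists n.
Qed.

End limn_esup_witnesses.

Lemma limn_esup_le_of_reflected_walk (R : realType) (x : nat -> R) (a b : R) :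
  0 < b ->
  (limn_esup (fun k => (indic_b R ((x k < a) && (a < x k.+1)) * (x k.+1 - a))%:E)
     <= b%:E)%E ->
  (forall N, exists2 n, (N <= n)%N & x n < a) ->
  (forall eps, 0 < eps -> exists N, forall i,
     reflected_walk (fun j => increment_above x a (N + j)) i < eps) ->
  (limn_esup (fun n => (x n)%:E) <= (a + b)%:E)%E.
Proof.
move=> b0 overshoot_le below walk_small; rewrite leNgt; apply/negP => ab_lt.
have [eps [eps0 gap]] : exists eps, 0 < eps /\
    ((a + b + 2 * eps)%:E < limn_esup (fun n => (x n)%:E))%E.
  move: ab_lt; case: (limn_esup _) => [r| |] //= abr.
    have {}abr : a + b < r by rewrite -lte_fin.
    have [e e4] : exists e : R, 4 * e = r - (a + b).
      by exists ((r - (a + b)) / 4); rewrite mulrC divfK.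
    by exists e; rewrite lte_fin; split; lra.
  by exists 1; rewrite ltry.
have b_lt : (b%:E < (b + eps)%:E)%E by rewrite lte_fin ltrDl.
have [K overshootK] := limn_esup_lt_eventually (le_lt_trans overshoot_le b_lt).
have [N walkN] := walk_small eps eps0.
have [k1 k1NK xk1] := below (maxn N K).
have [n k1n xn] := lt_limn_esup_infinitely gap k1.
have := walkN (n - N)%N; rewrite ltNge => /negP; apply.
apply: reflected_walk_ge_crossing b0 eps0 _ xk1 _ _.
- by move: k1NK; rewrite geq_max => /andP[-> _].
- by rewrite -lte_fin.
- by move=> k k1k; rewrite -lte_fin; apply: overshootK; move: k1NK; lia.
Qed.

Section process.
Context d (T : measurableType d) (R : realType) (P : probability T R)
  (F : nat -> set (set T)) (xi : nat -> T -> R) (a : R).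
Hypotheses (hF : filtration F) (hxi : adapted F xi).
Hypothesis drift : forall k,
  cond_exp_nonpos P (F k) (fun w => increment_above (xi^~ w) a k).

Local Notation D k w := (increment_above (xi^~ w) a k).
Local Notation W eps N i w :=
  (stopped_walk (fun j => increment_above (xi^~ w) a (N + j)) eps i).

Let sF := filtration_sigma_algebra hF.
Let FM := filtration_sub_measurable hF.

Let measurable_wrt_D k : measurable_wrt (F k.+1) (fun w => D k w).
Proof.
have mxi m : (m <= k.+1)%N -> measurable_wrt (F k.+1) (xi m).
  exact: adapted_measurable_wrt.
apply: (measurable_wrtM (sF _)).
  by apply: (measurable_wrtD (sF _)); last apply: (measurable_wrtN (sF _)); exact: mxi.
by apply/(measurable_wrt_indic_b (sF _)); exact: measurable_wrt_ge a (mxi k _).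
Qed.

Let measurable_wrt_W eps N i : measurable_wrt (F (N + i)) (fun w => W eps N i w).
Proof.
elim: i => [|i IH] /=; first exact: measurable_wrt_cst.
have {}IH : measurable_wrt (F (N + i.+1)) (fun w => W eps N i w).
  by apply: measurable_wrt_sub IH; apply: (filtration_mono hF); rewrite leq_add2l.
apply: (measurable_wrt_max (sF _)) (measurable_wrt_cst (sF _) 0).
apply: (measurable_wrtD (sF _) IH); apply: (measurable_wrtM (sF _)).
  by rewrite addnS; exact: measurable_wrt_D.
by apply/(measurable_wrt_indic_b (sF _)); exact: measurable_wrt_lt eps IH.
Qed.

Lemma stopped_walk_sqr_step eps N i : 0 < eps ->
  (\int[P]_w (W eps N i.+1 w ^+ 2)%:E <=
   \int[P]_w (W eps N i w ^+ 2)%:E + \int[P]_w (D (N + i) w ^+ 2)%:E)%E.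
Proof.
move=> eps0; set k := (N + i)%N.
have mW := measurable_wrt_W eps N i.
(* [Z w * D k w] is the cross term in the square of the next step of the walk. *)
pose Z w := 2 * W eps N i w * indic_b R (W eps N i w < eps).
have Zb w : 0 <= Z w <= 2 * eps.
  have W0 := stopped_walk_ge0 (fun j => D (N + j) w) eps i.
  by rewrite /Z /indic_b; case: ltP => lt; rewrite ?mulr1 ?mulr0; apply/andP; split; nra.
have mZ : measurable_wrt (F k) Z.
  exact (measurable_wrtM (sF _) (measurable_wrtM (sF _) (measurable_wrt_cst (sF _) 2) mW)
    (measurable_wrt_indic_b (sF _) (measurable_wrt_lt eps mW))).
have mT j (f : T -> R) : measurable_wrt (F j) f -> measurable_fun setT f.
  exact: measurable_wrt_measurable.
have mWi := measurable_funX 2 (mT _ _ mW).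
have mWi1 := measurable_funX 2 (mT _ _ (measurable_wrt_W eps N i.+1)).
have mDk := mT _ _ (measurable_wrt_D k).
have mZT := mT _ _ mZ.
have mZneg : measurable_fun setT (fun w => Z w * neg_part (D k w)).
  exact/measurable_funM/measurable_maxr/measurable_cst/measurableT_comp.
have mZpos : measurable_fun setT (fun w => Z w * pos_part (D k w)).
  exact/measurable_funM/measurable_maxr/measurable_cst.
have sqr0 (f : T -> R) w : 0 <= f w ^+ 2 by rewrite sqr_ge0.
have Zneg0 w : 0 <= Z w * neg_part (D k w).
  by rewrite mulr_ge0 ?neg_part_ge0 //; case/andP: (Zb w).
have Zpos0 w : 0 <= Z w * pos_part (D k w).
  by rewrite mulr_ge0 ?pos_part_ge0 //; case/andP: (Zb w).
apply: (lee_cancel_fin (integral_mul_neg_part_fin_num (drift k) _ mZT Zb)).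
- by rewrite mulr_ge0 // ltW.
- exact (integral_mul_pos_le_neg (sF k) (@FM k) (drift k) mZ Zb).
rewrite -(ge0_integral_EFinD _ mWi1 mZneg (sqr0 _) Zneg0).
rewrite -(ge0_integral_EFinD _ mWi (measurable_funX 2 mDk) (sqr0 _) (sqr0 _)).
rewrite -ge0_integral_EFinD //; last 2 first.
- exact/measurable_funD/measurable_funX.
- by move=> w; rewrite addr_ge0 ?sqr_ge0.
apply: ge0_le_integral => //.
- by move=> w _; rewrite lee_fin addr_ge0 ?sqr_ge0.
- exact/measurable_EFinP/measurable_funD.
- by apply/measurable_EFinP/measurable_funD => //; exact/measurable_funD/measurable_funX.
by move=> w _; rewrite lee_fin; exact: sqr_max_add_indic_le (stopped_walk_ge0 _ _ _).
Qed.

Lemma stopped_walk_sqr_le eps N i : 0 < eps ->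
  (\int[P]_w (W eps N i w ^+ 2)%:E <=
   \sum_(N <= j < N + i) \int[P]_w (D j w ^+ 2)%:E)%E.
Proof.
move=> eps0; elim: i => [|i IH].
  by rewrite addn0 big_geq // integral0_eq // => w _; rewrite expr0n.
apply: le_trans (stopped_walk_sqr_step N i eps0) _.
by rewrite addnS big_nat_recr ?leq_addr //=; exact: leeD2r.
Qed.

Let measurable_reach eps N i : measurable [set w | eps <= W eps N i w].
Proof. exact: FM (measurable_wrt_ge eps (measurable_wrt_W eps N i)). Qed.

Lemma stopped_walk_reach_le eps N : 0 < eps ->
  ((eps ^+ 2)%:E * P (\bigcup_i [set w | (eps <= W eps N i w)%R]) <=
   \sum_(N <= j <oo) \int[P]_w (D j w ^+ 2)%:E)%E.
Proof.
move=> eps0.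
have reach_nd : {homo (fun i => [set w | eps <= W eps N i w]) :
    n m / (n <= m)%N >-> (n <= m)%O}.
  move=> n m /subnKC <-; apply/subsetPset; elim: (m - n)%N => [|j IH] w.
    by rewrite addn0.
  by move=> /IH reach; rewrite /= addnS stopped_walk_stop.
have cvgP := nondecreasing_cvg_mu (mu := P) (measurable_reach eps N)
  (bigcup_measurable (fun i _ => measurable_reach eps N i)) reach_nd.
have cvgZ := cvgeZl (isT : (eps ^+ 2)%:E \is a fin_num) cvgP.
rewrite -(cvg_lim (@ereal_hausdorff R) cvgZ).
apply: lime_le; first by apply/cvg_ex; eexists; exact: cvgZ.
apply: nearW => i /=.
apply: le_trans (sqr_markov _ (ltW eps0) _) _.
  exact/(measurable_wrt_measurable (@FM _))/measurable_wrt_W.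
apply: le_trans (stopped_walk_sqr_le N i eps0) _.
by apply: nneseries_lim_ge => j _ _; apply: integral_ge0 => w _; rewrite lee_fin sqr_ge0.
Qed.

Hypothesis sq_summable :
  (\sum_(0 <= k <oo) \int[P]_w (D k w ^+ 2)%:E < +oo)%E.

Lemma ae_reflected_walk_lt eps : 0 < eps ->
  {ae P, forall w, exists N, forall i,
     reflected_walk (fun j => D (N + j) w) i < eps}.
Proof.
move=> eps0; set C := \bigcap_N \bigcup_i [set w | (eps <= W eps N i w)%R].
have mC : measurable C.
  by apply: bigcapT_measurable => N; apply: bigcup_measurable => i _.
exists C; split => //.
  apply/eqP; rewrite eq_le measure_ge0 andbT.
  have tail := nneseries_tail_cvg sq_summable
    (fun k _ => integral_ge0 _ (fun w _ => sqr_ge0 (D k w) : (0 <= _%:E)%E)).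
  have : ((eps ^+ 2)%:E * P C <= 0)%E.
    rewrite -(cvg_lim (@ereal_hausdorff R) tail).
    apply: lime_ge; first by apply/cvg_ex; eexists; exact: tail.
    apply: nearW => N; apply: le_trans (stopped_walk_reach_le N eps0).
    apply: lee_wpmul2l; first by rewrite lee_fin sqr_ge0.
    apply: le_measure; rewrite ?inE //; first exact: bigcup_measurable.
    by move=> w /(_ N I).
  by rewrite pmule_rle0 // lte_fin exprn_gt0.
move=> w /= small_none N _; apply: contrapT => never.
apply: small_none; exists N => i; apply: reflected_walk_lt.
by rewrite ltNge; apply/negP => reach; apply: never; exists i.
Qed.

End process.

Theorem mainTheorem4 (d : measure_display) (T : measurableType d)
  (R : realType) (P : probability T R)
  (F : nat -> set (set T)) (xi : nat -> T -> R) (a b : R) :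
  filtration F -> adapted F xi -> 0 < b ->
  (forall k, cond_exp_nonpos P (F k)
     (fun w => (xi k.+1 w - xi k w) * indic_b R (a <= xi k w))) ->
  {ae P, forall w,
     (limn_esup (fun k => ((indic_b R ((xi k w < a) && (a < xi k.+1 w))) *
                           (xi k.+1 w - a))%:E) <= b%:E)%E} ->
  (\sum_(0 <= k <oo)
     \int[P]_w (((xi k.+1 w - xi k w) ^+ 2) * indic_b R (a <= xi k w))%:E
     < +oo)%E ->
  {ae P, forall w, switches_io xi a w ->
     (limn_esup (fun n => (xi n w)%:E) <= (a + b)%:E)%E}.
Proof.
move=> hF hxi b0 drift overshoot_le sq_summable.
have walks_small : {ae P, forall w, forall m, exists N, forall i,
    reflected_walk (fun j => increment_above (xi^~ w) a (N + j)) i < m.+1%:R^-1}.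
  apply: ae_foralln => m; apply: (ae_reflected_walk_lt hF hxi drift) => //.
  by under eq_eseriesr do under eq_integral do rewrite increment_above_sqr.
apply: filterS2 overshoot_le walks_small => w overshoot_w small_w [below_w _].
apply: (limn_esup_le_of_reflected_walk b0 overshoot_w below_w) => eps eps0.
have [m] := ltr_add_invr eps0; rewrite add0r => m_lt.
by have [N smallN] := small_w m; exists N => i; apply: lt_trans m_lt.
Qed.
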